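(* Let $H$ be a one-dimensional summable Hamiltonian. Then for every $k\in\mathbb{N}$ (with $k\ge1$) and every $X\in\{0,1\}^{\mathbb{Z}}$, $$\rho_H(X)=\liminf_{m\to\infty}\frac{H(X([-mk,mk]))}{2mk+1}.$$
   Context: A pattern is a configuration in $\{0,1\}^A$ on a finite set $A\subset\mathbb{Z}$; a one-dimensional Hamiltonian is a translation-invariant assignment of energies $\Phi(p)$ to patterns $p$, and for a finite segment $w$ of a sequence, $H(w)$ is the total energy of all patterns occurring within $w$. $H$ is summable if there is $M>0$ such that for every $i\in\mathbb{Z}$, $\sum_{p\in P_i}|\Phi(p)|<M$, where $P_i$ is the set of finite patterns whose support contains the coordinate $i$. The energy density is $\rho_H(X)=\liminf_{n\to\infty}\frac{H(X([-n,n]))}{2n+1}$, where $X([-n,n])=(X(i))_{i=-n}^n$. *)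

From HB Require Import structures.
From mathcomp Require Import all_boot all_order all_algebra.
From mathcomp Require Import finmap.
From mathcomp Require Import all_classical all_reals.
From mathcomp Require Import topology normedtype sequences esum.
Set Implicit Arguments. Unset Strict Implicit. Unset Printing Implicit Defensive.
Import Order.TTheory GRing.Theory Num.Theory.

Local Open Scope fset_scope.
Local Open Scope fmap_scope.
Local Open Scope ring_scope.

(* A pattern: a configuration in {0,1}^A on a finite set A of integers,
   encoded as a finite map int -> bool with domain A (0 = false, 1 = true). *)
Definition pattern := {fmap int -> bool}.

Definition restr (X : int -> bool) (A : {fset int}) : pattern :=
  [fmap x : A => X (val x)].

Definition is_translate (p q : pattern) (t : int) : Prop :=
  forall x : int, q.[? (x + t)] = p.[? x].

Definition translation_invariant (R : realType) (Phi : pattern -> R) : Prop :=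
  forall (p q : pattern) (t : int), is_translate p q t -> Phi q = Phi p.

Definition summable_ham (R : realType) (Phi : pattern -> R) : Prop :=
  exists M : R, 0 < M /\
    forall i : int,
      (\esum_(p in [set p : pattern | i \in domf p]) (`|Phi p|)%:E < M%:E)%E.

Definition segment (a : int) (N : nat) : {fset int} :=
  seq_fset tt [seq a + i%:Z | i <- iota 0 N].

(* H(X([a, a+N-1])): total energy of the (nonempty) patterns occurring
   within the segment X([a, a+N-1]), i.e. of the restrictions X|_A for
   nonempty A contained in the segment. *)
Definition energy (R : realType) (Phi : pattern -> R) (X : int -> bool)
    (a : int) (N : nat) : R :=
  \sum_(A <- fpowerset (segment a N) | A != fset0) Phi (restr X A).

Definition energy_sym (R : realType) (Phi : pattern -> R) (X : int -> bool)
    (n : nat) : R :=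
  energy Phi X (- n%:Z) (n.*2.+1).

Definition energy_density (R : realType) (Phi : pattern -> R)
    (X : int -> bool) : \bar R :=
  limn_einf (fun n : nat => (energy_sym Phi X n / (n.*2.+1)%:R)%:E).

From HB Require Import structures.
From mathcomp Require Import all_boot all_order all_algebra.
From mathcomp Require Import finmap.
From mathcomp Require Import all_classical all_reals.
From mathcomp Require Import topology normedtype sequences esum.
From mathcomp Require Import ereal zify ring lra.
Set Implicit Arguments. Unset Strict Implicit. Unset Printing Implicit Defensive.
Import Order.TTheory GRing.Theory Num.Theory.
Local Open Scope ring_scope.

(* Summability bounds by M the total |energy| of the patterns whose support
   contains a given site, so enlarging a finite window S to T changes its
   energy by at most M |T \ S|.  For p = k * (n %/ k) the windows [-p, p] and
   [-n, n] differ in at most 2k sites, hence the energy averages over them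
   differ by O(k / n).  The liminf along the multiples of k is thus at most
   the full liminf, and it is at least the full liminf as for any
   subsequence. *)

Section LiminfSubsequence.
Variable R : realType.
Local Open Scope ereal_scope.

Lemma limn_einfE (u : (\bar R)^nat) :
  limn_einf u = ereal_sup (range (einfs u)).
Proof. by rewrite limn_einf_lim; apply/cvg_lim => //; exact: cvg_einfs_sup. Qed.

Lemma limn_einf_le_subseq (u : (\bar R)^nat) (phi : nat -> nat) :
  (forall m, m <= phi m)%N -> limn_einf u <= limn_einf (fun m => u (phi m)).
Proof.
move=> phi_ge; rewrite !limn_einfE.
apply: ge_ereal_sup => _ [m _ <-]; apply: le_ereal_sup_tmp.
exists (einfs (fun m => u (phi m)) m); first by exists m.
apply: le_ereal_inf_tmp => _ [j /= mj <-]; apply: ereal_inf_lbound.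
by exists (phi j) => //=; exact: leq_trans mj (phi_ge j).
Qed.

Lemma limn_einf_le_approx (u v : R^nat) (psi : nat -> nat) :
  (forall m, exists N, forall n, (N <= n)%N -> (m <= psi n)%N) ->
  (forall e : R, (0 < e)%R ->
     exists N, forall n, (N <= n)%N -> (v (psi n) <= u n + e)%R) ->
  limn_einf (fun m => (v m)%:E) <= limn_einf (fun n => (u n)%:E).
Proof.
move=> psi_oo v_approx; apply/lee_addgt0Pr => e e0; rewrite !limn_einfE.
apply: ge_ereal_sup => _ [m _ <-].
have [N1 hN1] := psi_oo m; have [N2 hN2] := v_approx e e0.
apply: (@le_trans _ _ (einfs (fun n => (u n)%:E) (maxn N1 N2) + e%:E)); last first.
  by apply: leeD2r; apply: ereal_sup_ubound; exists (maxn N1 N2).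
rewrite -leeBlDr //; apply: le_ereal_inf_tmp => _ [n /= Nn <-].
rewrite EFinN leeBlDr // -EFinD.
apply: (@le_trans _ _ (v (psi n))%:E).
  by apply: ereal_inf_lbound; exists (psi n) => //=; apply: hN1; lia.
by rewrite lee_fin; apply: hN2; lia.
Qed.

End LiminfSubsequence.

Lemma norm_ratio_sub_le (R : realFieldType) (x y P N M : R) :
  0 < P <= N -> `|x - y| <= (N - P) * M -> `|y| <= P * M ->
  `|x / N - y / P| * N <= 2 * (N - P) * M.
Proof.
move=> /andP[P0 PN] hxy hy.
have N0 : 0 < N by exact: lt_le_trans PN.
rewrite -[X in _ * X <= _](gtr0_norm N0) -normrM.
have -> : (x / N - y / P) * N = (x - y) - y / P * (N - P).
  by field; rewrite !gt_eqF.
have hyP : `|y / P| <= M by rewrite normrM normfV (gtr0_norm P0) ler_pdivrMr // mulrC.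
apply: le_trans (ler_normB _ _) _.
rewrite normrM (ger0_norm (_ : 0 <= N - P)) ?subr_ge0 //.
have : `|y / P| * (N - P) <= M * (N - P) by apply: ler_wpM2r; rewrite ?subr_ge0.
lra.
Qed.

Lemma mem_segment a N x : (x \in segment a N) = (a <= x < a + N%:Z).
Proof.
rewrite /segment seq_fsetE; apply/mapP/idP.
  by move=> [i]; rewrite mem_iota add0n => /andP[_ iN] ->; apply/andP; split; lia.
move=> /andP[ax xa]; exists `|x - a|%N; first by rewrite mem_iota add0n /=; lia.
lia.
Qed.

Lemma card_segment a N : #|` segment a N| = N.
Proof.
rewrite /segment size_seq_fset undup_id ?size_map ?size_iota //.
by rewrite map_inj_uniq ?iota_uniq // => i j /addrI; lia.
Qed.

Lemma segment_sym_subset (p n : nat) : (p <= n)%N ->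
  (segment (- p%:Z) p.*2.+1 `<=` segment (- n%:Z) n.*2.+1)%fset.
Proof.
by move=> pn; apply/fsubsetP => x; rewrite !mem_segment -!muln2 => /andP[? ?];
  apply/andP; split; lia.
Qed.

Definition fset_energy (R : realType) (Phi : pattern -> R) (X : int -> bool)
    (T : {fset int}) : R :=
  \sum_(A <- fpowerset T | A != fset0%fset) Phi (restr X A).

Definition energy_avg (R : realType) (Phi : pattern -> R) (X : int -> bool)
    (n : nat) : R :=
  energy_sym Phi X n / (n.*2.+1)%:R.

Section SummableEstimates.
Variables (R : realType) (Phi : pattern -> R) (M : R).
Hypothesis M_gt0 : 0 < M.
Hypothesis M_bound : forall i : int,
  (\esum_(p in [set p : pattern | i \in domf p]) (`|Phi p|)%:E < M%:E)%E.
Variable X : int -> bool.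

Lemma sum_norm_restr_mem_le (i : int) (s : seq {fset int}) : uniq s ->
  \sum_(A <- s | i \in A) `|Phi (restr X A)| <= M.
Proof.
move=> s_uniq.
rewrite -big_filter -(big_map (restr X) xpredT (fun p => `|Phi p|)).
have r_uniq : uniq [seq restr X A | A <- s & i \in A].
  rewrite map_inj_in_uniq ?filter_uniq // => A B _ _.
  by move=> /(congr1 (fun p : pattern => domf p)).
rewrite -lee_fin -sumEFin; apply: le_trans (ltW (M_bound i)).
rewrite fsbig_seq //; apply: esum_ge.
exists [set` [seq restr X A | A <- s & i \in A]]%classic => //.
split; first exact: finite_seq.
by move=> p /= /mapP[A]; rewrite mem_filter => /andP[iA _] ->.
Qed.

Lemma norm_sum_restr_le (s : seq {fset int}) (P : pred {fset int}) (S : seq int) :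
  uniq s -> (forall A, A \in s -> P A -> has (fun i => i \in A) S) ->
  `|\sum_(A <- s | P A) Phi (restr X A)| <= M *+ size S.
Proof.
move=> s_uniq hitS; apply: le_trans (ler_norm_sum _ _ _) _.
apply: (@le_trans _ _
  (\sum_(A <- s | P A) \sum_(i <- S | i \in A) `|Phi (restr X A)|)).
  rewrite big_seq_cond [leRHS]big_seq_cond; apply: ler_sum => A /andP[As PA].
  have /hasP[i iS iA] := hitS A As PA.
  by rewrite (big_rem i iS) /= iA lerDl sumr_ge0.
rewrite (exchange_big_dep xpredT) //= -iter_addr_0 -count_predT -big_const_seq.
apply: ler_sum => i _; apply: le_trans (sum_norm_restr_mem_le i s_uniq).
rewrite [leRHS](bigID P) /= (eq_bigl (fun A => (i \in A) && P A)) ?lerDl ?sumr_ge0 //.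
by move=> A; rewrite andbC.
Qed.

Lemma norm_fset_energy_le (T : {fset int}) : `|fset_energy Phi X T| <= M *+ #|` T|.
Proof.
apply: norm_sum_restr_le; first exact: fset_uniq.
move=> A; rewrite fpowersetE => AT /fset0Pn[x xA].
by apply/hasP; exists x => //; exact: (fsubsetP AT).
Qed.

Lemma fset_energyB (S T : {fset int}) : (S `<=` T)%fset ->
  fset_energy Phi X T - fset_energy Phi X S =
  \sum_(A <- fpowerset T | (A != fset0%fset) && ~~ (A `<=` S)%fset) Phi (restr X A).
Proof.
move=> ST; rewrite /fset_energy (bigID (fun A => A `<=` S)%fset) /=.
suff -> : \sum_(A <- fpowerset S | A != fset0%fset) Phi (restr X A) =
    \sum_(A <- fpowerset T | (A != fset0%fset) && (A `<=` S)%fset) Phi (restr X A).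
  by rewrite addrAC subrr add0r.
rewrite big_mkcond [RHS]big_mkcond /= (eq_big_seq (fun A =>
  if (A != fset0%fset) && (A `<=` S)%fset then Phi (restr X A) else 0)).
  apply: big_fset_incl; first by rewrite fpowersetS.
  by move=> A _; rewrite fpowersetE => /negbTE ->; rewrite andbF.
by move=> A; rewrite fpowersetE => ->; rewrite andbT.
Qed.

Lemma norm_fset_energy_subset_le (S T : {fset int}) : (S `<=` T)%fset ->
  `|fset_energy Phi X T - fset_energy Phi X S| <= M *+ #|` T `\` S|%fset.
Proof.
move=> ST; rewrite fset_energyB //; apply: norm_sum_restr_le.
  exact: fset_uniq.
move=> A; rewrite fpowersetE => AT /andP[_ /fsubsetPn[x xA xS]].
by apply/hasP; exists x => //; rewrite in_fsetD xS (fsubsetP AT).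
Qed.

Lemma norm_energy_sym_le n : `|energy_sym Phi X n| <= (n.*2.+1)%:R * M.
Proof.
by rewrite mulr_natl; have := norm_fset_energy_le (segment (- n%:Z) n.*2.+1);
  rewrite card_segment.
Qed.

Lemma norm_energy_sym_sub_le p n : (p <= n)%N ->
  `|energy_sym Phi X n - energy_sym Phi X p| <= ((n.*2.+1)%:R - (p.*2.+1)%:R) * M.
Proof.
move=> pn; rewrite -natrB ?ltnS ?leq_double // mulr_natl.
have := norm_fset_energy_subset_le (segment_sym_subset pn).
by rewrite cardfsDS ?segment_sym_subset // !card_segment.
Qed.

Variable k : nat.
Hypothesis k_gt0 : (0 < k)%N.

Lemma norm_energy_avg_floor_le n :
  `|energy_avg Phi X n - energy_avg Phi X (n %/ k * k)| * (n.*2.+1)%:R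
    <= 4 * k%:R * M.
Proof.
set p := (n %/ k * k)%N.
have pn : (p <= n)%N by rewrite leq_trunc_div.
have npk : (n - p <= k)%N by have := divn_eq n k; have := ltn_pmod n k_gt0; lia.
have NP : (n.*2.+1)%:R - (p.*2.+1)%:R = 2 * (n - p)%:R :> R.
  by rewrite -natrB ?ltnS ?leq_double // -natrM; congr _%:R; lia.
rewrite /energy_avg; apply: le_trans (norm_ratio_sub_le _ _ _) _.
- by apply/andP; split; rewrite ?ltr0n // ler_nat ltnS leq_double.
- exact: norm_energy_sym_sub_le.
- exact: norm_energy_sym_le.
rewrite NP ler_pM2r //; have : (n - p)%:R <= k%:R :> R by rewrite ler_nat.
lra.
Qed.

Lemma energy_avg_floor_approx (e : R) : 0 < e -> exists N, forall n, (N <= n)%N ->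
  energy_avg Phi X (n %/ k * k) <= energy_avg Phi X n + e.
Proof.
move=> e_gt0; set B := Num.bound (4 * k%:R * M / e).
have hB : 4 * k%:R * M < B%:R * e.
  by rewrite -ltr_pdivrMr // archi_boundP // divr_ge0 ?mulr_ge0 // ltW.
exists B => n Bn.
have n_gt0 : 0 < (n.*2.+1)%:R :> R by rewrite ltr0n.
have : `|energy_avg Phi X n - energy_avg Phi X (n %/ k * k)| <= e.
  rewrite -(ler_pM2r n_gt0); apply: le_trans (norm_energy_avg_floor_le n) _.
  apply: ltW; apply: lt_le_trans hB _.
  by rewrite mulrC ler_pM2l // ler_nat -muln2; lia.
rewrite ler_norml; lra.
Qed.

End SummableEstimates.

Theorem lemma4p6 (R : realType) (Phi : pattern -> R) :
  translation_invariant Phi -> summable_ham Phi ->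
  forall (k : nat), (1 <= k)%N ->
  forall X : int -> bool,
    energy_density Phi X =
    limn_einf (fun m : nat =>
      (energy_sym Phi X (m * k) / ((m * k).*2.+1)%:R)%:E).
Proof.
move=> _ [M [M_gt0 M_bound]] k k_gt0 X.
apply/le_anti/andP; split.
  by apply: limn_einf_le_subseq => m; exact: leq_pmulr.
apply: (limn_einf_le_approx (psi := fun n => n %/ k)%N).
- by move=> m; exists (m * k)%N => n; rewrite leq_divRL.
- exact: (energy_avg_floor_approx M_gt0 M_bound X k_gt0).
Qed.
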